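(* For a nonempty finite subset $E\subseteq\mathbb{N}$ the following are equivalent: (1) $\mathcal{F}_E=\mathcal{F}_\infty$; (2) $A_E=\{2\}$. Moreover, if $|E|=2$, then (1) and (2) are equivalent to (3): $E=\{2^n,2^{n+1}\}$ for some integer $n\ge0$.
   Context: $\mathbb{N}=\{1,2,\dots\}$, $\mathbb{N}_0=\{0\}\cup\mathbb{N}$, $\Pi$ the set of primes. The Kirch topology $\tau_K$ on $\mathbb{N}$ is generated by the base of all $a+b\mathbb{N}_0=\{a+bn:n\in\mathbb{N}_0\}$ with $a,b\in\mathbb{N}$ coprime and $b$ square-free. Closures $\overline{U}$ are in $\tau_K$; $\tau_x=\{U\in\tau_K:x\in U\}$. For finite $E\subseteq\mathbb{N}$, $\mathcal{F}_E=\{B\subseteq\mathbb{N}:\exists (U_x)_{x\in E}\in\prod_{x\in E}\tau_x\ (\bigcap_{x\in E}\overline{U_x}\subseteq B)\}$, and $\mathcal{F}_\infty=\{B\subseteq\mathbb{N}:\exists n\in\mathbb{N}\ \exists U_1,\dots,U_n\in\tau_K\setminus\{\emptyset\}\ (\overline{U_1}\cap\dots\cap\overline{U_n}\subseteq B)\}$. For nonempty finite $E$, $A_E=\{p\in\Pi:\exists k\in\mathbb{N}\ (E\subseteq p\mathbb{Z}\cup(k+p\mathbb{Z}))\}$. *)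

(* Subsets of N = {1,2,...} are
   represented as predicates [nat -> Prop] on nat, required to avoid 0. *)
From mathcomp Require Import all_boot.
From mathcomp Require Export finmap.
Set Implicit Arguments. Unset Strict Implicit. Unset Printing Implicit Defensive.

Definition squarefree (b : nat) : Prop :=
  forall p, prime p -> ~ (p * p %| b).

Definition arith (a b : nat) : nat -> Prop :=
  fun x => exists n, x = a + b * n.

(* basic open sets of the Kirch topology *)
Definition kbase (V : nat -> Prop) : Prop :=
  exists a b, 0 < a /\ 0 < b /\ coprime a b /\ squarefree b /\
    (forall x, V x <-> arith a b x).

Definition kopen (U : nat -> Prop) : Prop :=
  (forall x, U x -> 0 < x) /\
  (forall x, U x -> exists V, kbase V /\ V x /\ (forall y, V y -> U y)).

Definition kclosure (U : nat -> Prop) : nat -> Prop :=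
  fun x => 0 < x /\ forall V, kopen V -> V x -> exists y, V y /\ U y.

Definition FE (E : {fset nat}) (B : nat -> Prop) : Prop :=
  exists U : nat -> (nat -> Prop),
    (forall x, x \in E -> kopen (U x) /\ U x x) /\
    (forall y, (forall x, x \in E -> kclosure (U x) y) -> B y).

Definition Finf (B : nat -> Prop) : Prop :=
  exists n, 0 < n /\ exists U : nat -> (nat -> Prop),
    (forall i, i < n -> kopen (U i) /\ exists z, U i z) /\
    (forall y, (forall i, i < n -> kclosure (U i) y) -> B y).

Definition FE_eq_Finf (E : {fset nat}) : Prop :=
  forall B : nat -> Prop, (forall x, B x -> 0 < x) -> (FE E B <-> Finf B).

Definition AE (E : {fset nat}) (p : nat) : Prop :=
  prime p /\ exists k, 0 < k /\
    forall x, x \in E -> (p %| x) \/ (x = k %[mod p]).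

From mathcomp Require Import all_boot finmap zify.
Set Implicit Arguments. Unset Strict Implicit. Unset Printing Implicit Defensive.

(* A point y lies in the closure of a basic set a + bN_0 iff, for every prime q | b, y is
   divisible by q or congruent to a modulo q: closures only see residues modulo primes.
   If an odd prime p satisfies E ⊆ pZ ∪ (k + pZ), then for any basic neighbourhoods of the
   points of E, with moduli dividing N, a number y ≡ k (mod p), k chosen prime to p, divisible
   by the p'-part of N lies in all their closures and p ∤ y; but the closures of 1 + pN_0 and
   2 + pN_0 meet inside pN, so pN ∈ F_∞ \ F_E.
   Conversely, let A_E = {2} and let N be a common multiple of the moduli of basic subsets of
   U_1, ..., U_n. Give each x ∈ E the neighbourhood x + rN_0, r the product of the odd primes
   of N not dividing x. For an odd q | N, a common point y of their closures is divisible by q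
   or congruent to every point of E outside qZ, and the latter would put q in A_E; for q = 2
   there is no constraint since a is odd when b is even. So y lies in every closure of U_i.
   For E = {x, y}, A_E = {2} says that no odd prime divides x, y or y - x, i.e. x and y are
   powers of 2 whose difference is a power of 2. *)

Lemma squarefree_prime p : prime p -> squarefree p.
Proof.
move=> p_pr q q_pr qq_p.
have /eqP q_p : q == p by rewrite -dvdn_prime2 // (dvdn_trans (dvdn_mulr q (dvdnn q))).
have := dvdn_leq (prime_gt0 p_pr) qq_p; have := prime_gt1 p_pr; rewrite q_p; nia.
Qed.

Lemma squarefree_dvd d m : squarefree m -> d %| m -> squarefree d.
Proof. by move=> m_sqf d_m p p_pr pp_d; apply: (m_sqf p p_pr); exact: dvdn_trans d_m. Qed.

Lemma prime_dvd_prod_primes p (s : seq nat) : prime p -> all prime s ->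
  (p %| \prod_(q <- s) q) = (p \in s).
Proof.
move=> p_pr; elim: s => [|q s IHs] /=.
  by rewrite big_nil dvdn1 in_nil; case: (p =P 1) p_pr => // ->.
by case/andP=> q_pr s_pr; rewrite big_cons Euclid_dvdM // dvdn_prime2 // in_cons IHs.
Qed.

Lemma coprime_prod_primes x (s : seq nat) : all prime s ->
  coprime x (\prod_(q <- s) q) = all (fun q => ~~ (q %| x)) s.
Proof.
elim: s => [|q s IHs] /=; first by rewrite big_nil coprimen1.
by case/andP=> q_pr s_pr; rewrite big_cons coprimeMr coprime_sym prime_coprime // IHs.
Qed.

Lemma squarefree_prod_primes (s : seq nat) : uniq s -> all prime s ->
  squarefree (\prod_(q <- s) q).
Proof.
elim: s => [|q s IHs] /=.
  by move=> _ _ p p_pr; rewrite big_nil dvdn1 muln_eq1 => /andP[/eqP p1 _]; rewrite p1 in p_pr.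
case/andP=> q_s s_uniq /andP[q_pr s_pr] p p_pr; rewrite big_cons.
have [-> | p_q] := eqVneq p q.
  by rewrite dvdn_pmul2l ?prime_gt0 // prime_dvd_prod_primes // (negbTE q_s).
rewrite Gauss_dvdr; first exact: IHs.
by rewrite coprimeMl !prime_coprime // dvdn_prime2 // p_q.
Qed.

Lemma squarefree_gt0 g : squarefree g -> 0 < g.
Proof. by case: g => // /(_ 2 isT (dvdn0 _)). Qed.

Lemma squarefree_dvdP g m : squarefree g ->
  (forall q, prime q -> q %| g -> q %| m) -> g %| m.
Proof.
move=> g_sqf g_m; have g_gt0 := squarefree_gt0 g_sqf.
apply/(dvdn_partP _ g_gt0) => q; rewrite mem_primes => /and3P[q_pr _ q_g].
have q_log : logn q g <= 1.
  by rewrite leqNgt -pfactor_dvdn //; apply/negP; exact: g_sqf.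
by rewrite p_part (dvdn_trans (dvdn_exp2l q q_log)) // expn1 g_m.
Qed.

Lemma squarefree_eq_mod g u v : squarefree g ->
  (forall q, prime q -> q %| g -> u = v %[mod q]) -> u = v %[mod g].
Proof.
wlog uv : u v / u <= v => [W | g_sqf uv_mod].
  case: (leqP u v) => [|/ltnW] vu g_sqf uv_mod; first exact: W.
  by symmetry; apply: W => // q q_pr q_g; symmetry; exact: uv_mod.
apply/eqP; rewrite eq_sym eqn_mod_dvd //; apply: squarefree_dvdP => // q q_pr q_g.
by rewrite -eqn_mod_dvd // (uv_mod q q_pr q_g).
Qed.

Lemma arith_self a b : arith a b a.
Proof. by exists 0; rewrite muln0 addn0. Qed.

Lemma arith_mod a b x q : arith a b x -> q %| b -> x = a %[mod q].
Proof. by move=> [n ->] /dvdnP[r ->]; rewrite mulnAC addnC modnMDl. Qed.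

Lemma arith_meet a b c d : 0 < b -> 0 < d -> a = c %[mod gcdn b d] ->
  exists z, arith a b z /\ arith c d z.
Proof.
wlog ac : a b c d / a <= c => [W b_gt0 d_gt0 ac_mod | b_gt0 _].
  case: (leqP a c) => [|/ltnW] ca; first exact: W.
  rewrite gcdnC in ac_mod.
  by have [z [? ?]] := W c d a b ca d_gt0 b_gt0 (esym ac_mod); exists z.
move/eqP; rewrite eq_sym eqn_mod_dvd // => /dvdnP[t c_a].
case: (egcdnP d b_gt0) => kb kd bezout _.
exists (c + d * (kd * t)); split; last by exists (kd * t).
by exists (kb * t); nia.
Qed.

Lemma exists_common_multiple (T : eqType) (s : seq T) (P : T -> nat -> Prop) :
  (forall x, x \in s -> exists2 b, 0 < b & P x b) ->
  exists2 N, 0 < N & forall x, x \in s -> exists2 b, b %| N & P x b.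
Proof.
elim: s => [|y s IHs] s_P; first by exists 1.
have [N N_gt0 N_P] : exists2 N, 0 < N & forall x, x \in s -> exists2 b, b %| N & P x b.
  by apply: IHs => x x_s; apply: s_P; rewrite in_cons x_s orbT.
have [b b_gt0 y_P] := s_P y (mem_head y s).
exists (N * b) => [|x]; first by rewrite muln_gt0 N_gt0.
rewrite in_cons => /predU1P[-> | /N_P[c c_N x_P]]; first by exists b; rewrite ?dvdn_mull.
by exists c; rewrite ?dvdn_mulr.
Qed.

Lemma kopen_arith a b : 0 < a -> 0 < b -> coprime a b -> squarefree b ->
  kopen (arith a b).
Proof.
move=> a_gt0 b_gt0 ab_co b_sqf; split=> [x [n ->] | x x_ab]; first exact: ltn_addr.
by exists (arith a b); split=> //; exists a, b.
Qed.

Definition basic_nbhd (U : nat -> Prop) x a b : Prop :=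
  [/\ coprime a b, squarefree b, arith a b x & forall z, arith a b z -> U z].

Lemma kopen_basic U x : kopen U -> U x ->
  exists2 b, 0 < b & exists a, basic_nbhd U x a b.
Proof.
case=> _ U_open /U_open[V [[a [b [_ [b_gt0 [ab_co [b_sqf V_ab]]]]]] [V_x V_U]]].
by exists b => //; exists a; split=> // [|z /V_ab]; [exact/V_ab | exact: V_U].
Qed.

Lemma kclosureS (U V : nat -> Prop) y : (forall z, U z -> V z) ->
  kclosure U y -> kclosure V y.
Proof.
move=> U_V [y_gt0 y_cl]; split=> // W W_open W_y.
by have [z [W_z U_z]] := y_cl W W_open W_y; exists z; split; last exact: U_V.
Qed.

Lemma kclosure_arithP a b y : 0 < b ->
  kclosure (arith a b) y <->
  0 < y /\ forall q, prime q -> q %| b -> q %| y \/ y = a %[mod q].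
Proof.
move=> b_gt0; split=> [[y_gt0 y_cl] | [y_gt0 y_adh]].
  split=> // q q_pr q_b; have [q_y | q_ny] := boolP (q %| y); [by left | right].
  have yq_open : kopen (arith y q).
    apply: kopen_arith => //; first exact: prime_gt0.
      by rewrite coprime_sym prime_coprime.
    exact: squarefree_prime.
  have [z [y_z a_z]] := y_cl _ yq_open (arith_self y q).
  by rewrite -(arith_mod y_z (dvdnn q)) (arith_mod a_z q_b).
split=> // V V_open V_y.
have [d d_gt0 [c [cd_co d_sqf c_y c_V]]] := kopen_basic V_open V_y.
have [|z [a_z c_z]] := @arith_meet a b c d b_gt0 d_gt0.
  apply: squarefree_eq_mod (squarefree_dvd d_sqf (dvdn_gcdr b d)) _ => q q_pr.
  rewrite dvdn_gcd => /andP[q_b q_d].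
  have y_c := arith_mod c_y q_d.
  have q_nc : ~~ (q %| c) by rewrite -prime_coprime // (coprime_dvdl q_d) // coprime_sym.
  case: (y_adh q q_pr q_b) => [q_y | <-//].
  by case/negP: q_nc; rewrite /dvdn -y_c.
by exists z; split; [exact: c_V | exact: a_z].
Qed.

Definition multiples p : nat -> Prop := fun y => 0 < y /\ p %| y.

Lemma FE_Finf E B : E != fset0 -> FE E B -> Finf B.
Proof.
move=> E_n0 [U [U_open U_B]].
exists #|` E|; split; first by rewrite cardfs_gt0.
exists (fun i => U (nth 0 (enum_fset E) i)); split=> [i i_lt | y y_cl].
  have x_E : nth 0 (enum_fset E) i \in E by exact: mem_nth.
  by have [U_x_open U_x] := U_open _ x_E; split; last by exists (nth 0 (enum_fset E) i).
apply: U_B => x x_E; have := y_cl (index x (enum_fset E)).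
by rewrite nth_index // index_mem; apply.
Qed.

Lemma Finf_multiples p : prime p -> odd p -> Finf (multiples p).
Proof.
move=> p_pr p_odd; have p_gt0 := prime_gt0 p_pr.
exists 2; split=> //; exists (fun i => arith i.+1 p); split=> [i i_lt2 | y y_cl].
  split; last by exists i.+1; exact: arith_self.
  apply: kopen_arith => //; last exact: squarefree_prime.
  by case: i i_lt2 => [|[|//]] _; rewrite ?coprime1n ?coprime2n.
have /(kclosure_arithP _ _ p_gt0)[y_gt0 y_1] := y_cl 0 isT.
have /(kclosure_arithP _ _ p_gt0)[_ y_2] := y_cl 1 isT.
split=> //; have [//|y1] := y_1 p p_pr (dvdnn p); have [//|y2] := y_2 p p_pr (dvdnn p).
have p_gt2 := odd_prime_gt2 p_odd p_pr.
by move: y2; rewrite y1 !modn_small // ltnW.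
Qed.

Lemma multiples_notin_FE E p : AE E p -> odd p -> ~ FE E (multiples p).
Proof.
move=> [p_pr [k [_ E_k]]] p_odd [U [U_open U_mult]].
have [k' p_nk' E_k'] : exists2 k', ~~ (p %| k') &
    forall x, x \in E -> p %| x \/ x = k' %[mod p].
  have [p_k | p_nk] := boolP (p %| k); last by exists k.
  exists 1 => [|x /E_k [|x_k]]; [by rewrite dvdn1 gtn_eqF // prime_gt1 | by left | left].
  by rewrite /dvdn x_k; exact: p_k.
have [N N_gt0 N_E] : exists2 N, 0 < N &
    forall x, x \in enum_fset E -> exists2 b, b %| N & exists a, basic_nbhd (U x) x a b.
  by apply: exists_common_multiple => x /U_open[U_x_open U_x]; exact: kopen_basic.
pose M := N`_p^'.
have pM_co : coprime p M by rewrite (pnat_coprime (pnat_id p_pr) (part_pnat _ _)).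
pose y := chinese p M k' 0.
have y_k : y = k' %[mod p] := chinese_modl pM_co k' 0.
have M_y : M %| y by rewrite /dvdn chinese_modr // mod0n.
have p_ny : ~~ (p %| y) by rewrite /dvdn y_k.
suff : multiples p y by case=> _; rewrite (negbTE p_ny).
apply: U_mult => x x_E.
have [b b_N [a [ab_co _ a_x a_U]]] := N_E x x_E.
apply: kclosureS a_U _; apply/kclosure_arithP; first exact: dvdn_gt0 N_gt0 b_N.
split=> [|q q_pr q_b]; first by rewrite lt0n; apply: contraNneq p_ny => ->.
case: (eqVneq q p) q_b => [-> | q_p] q_b.
  have x_a := arith_mod a_x q_b.
  have p_na : ~~ (p %| a) by rewrite -prime_coprime // (coprime_dvdl q_b) // coprime_sym.
  have [p_x | x_k'] := E_k' x x_E; last by right; rewrite y_k -x_k' x_a.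
  by case/negP: p_na; rewrite /dvdn -x_a; exact: p_x.
left; apply: dvdn_trans M_y.
have : q \in \pi(M) by rewrite pi_of_part // inE /= mem_primes q_pr N_gt0 (dvdn_trans q_b b_N) !inE.
by rewrite mem_primes => /and3P[].
Qed.

Definition odd_rad_coprime N x := \prod_(q <- primes N | odd q && ~~ (q %| x)) q.

Lemma odd_rad_coprime_gt0 N x : 0 < odd_rad_coprime N x.
Proof. by apply: prodn_cond_gt0 => q /andP[/odd_gt0]. Qed.

Lemma kopen_odd_rad_coprime N x : 0 < x -> kopen (arith x (odd_rad_coprime N x)).
Proof.
move=> x_gt0; rewrite /odd_rad_coprime -big_filter.
set s := filter _ _.
have s_pr : all prime s by apply/allP => q; rewrite mem_filter mem_primes => /andP[_ /and3P[]].
have s_sqf : squarefree (\prod_(q <- s) q).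
  by apply: squarefree_prod_primes s_pr; exact/filter_uniq/primes_uniq.
apply: kopen_arith => //; first exact: squarefree_gt0.
by rewrite coprime_prod_primes //; apply/allP => q; rewrite mem_filter => /andP[/andP[]].
Qed.

Lemma dvdn_odd_rad_coprime N x q : 0 < N -> prime q -> odd q -> q %| N -> ~~ (q %| x) ->
  q %| odd_rad_coprime N x.
Proof.
move=> N_gt0 q_pr q_odd q_N q_nx; rewrite /odd_rad_coprime -big_filter.
rewrite prime_dvd_prod_primes // ?mem_filter ?q_odd ?q_nx ?mem_primes ?q_pr ?N_gt0 //.
by apply/allP => r; rewrite mem_filter mem_primes => /andP[_ /and3P[]].
Qed.

Lemma Finf_FE E B : E != fset0 -> (forall x, x \in E -> 0 < x) ->
  (forall p, prime p -> odd p -> ~ AE E p) -> Finf B -> FE E B.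
Proof.
move=> /fset0Pn[x0 x0_E] E_gt0 E_odd [n [_ [U [U_open U_B]]]].
have [N N_gt0 N_U] : exists2 N, 0 < N &
    forall i, i \in iota 0 n -> exists2 b, b %| N & exists a z, basic_nbhd (U i) z a b.
  apply: exists_common_multiple => i; rewrite mem_iota => /andP[_ i_lt].
  have [U_i_open [z U_z]] := U_open i i_lt.
  by have [b b_gt0 [a z_ab]] := kopen_basic U_i_open U_z; exists b => //; exists a, z.
exists (fun x => arith x (odd_rad_coprime N x)); split=> [x x_E | y y_cl].
  by split; [exact/kopen_odd_rad_coprime/E_gt0 | exact: arith_self].
have y_gt0 : 0 < y by case: (y_cl x0 x0_E).
apply: U_B => i i_lt; have [|b b_N [a [z [ab_co _ _ a_U]]]] := N_U i; first by rewrite mem_iota.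
apply: kclosureS a_U _; apply/kclosure_arithP; first exact: dvdn_gt0 N_gt0 b_N.
split=> // q q_pr q_b; have q_N := dvdn_trans q_b b_N.
have [q_odd | /(prime_oddPn q_pr) q2] := boolP (odd q); last first.
  have a_odd : odd a by rewrite -coprime2n -q2 (coprime_dvdl q_b) // coprime_sym.
  by rewrite q2 dvdn2 !modn2 a_odd; case: (odd y); [right | left].
have [q_y | q_ny] := boolP (q %| y); [by left | exfalso].
apply: (E_odd q q_pr q_odd); split=> //; exists y; split=> // x x_E.
have [q_x | q_nx] := boolP (q %| x); [by left | right].
have /(kclosure_arithP _ _ (odd_rad_coprime_gt0 N x))[_ y_x] := y_cl x x_E.
case: (y_x q q_pr (dvdn_odd_rad_coprime N_gt0 q_pr q_odd q_N q_nx)) => [q_y | ->] //.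
by rewrite q_y in q_ny.
Qed.

Lemma AE_2 E : AE E 2.
Proof.
by split=> //; exists 1; split=> // x _; rewrite dvdn2 modn2; case: (odd x); [right | left].
Qed.

Lemma AE_eq2P E :
  (forall p, AE E p <-> p = 2) <-> (forall p, prime p -> odd p -> ~ AE E p).
Proof.
split=> [AE_2P p p_pr p_odd /AE_2P p2 | no_odd p]; first by rewrite p2 in p_odd.
split=> [p_AE | ->]; last exact: AE_2.
have [p_pr _] := p_AE; have [p_odd | /(prime_oddPn p_pr)//] := boolP (odd p).
by case: (no_odd p p_pr p_odd p_AE).
Qed.

Open Scope fset_scope.

Lemma AE_fset2 x y p : 0 < x -> 0 < y ->
  AE [fset x; y] p <-> prime p /\ [\/ p %| x, p %| y | x = y %[mod p]].
Proof.
move=> x_gt0 y_gt0; split=> [[p_pr [k [_ xy_k]]] | [p_pr xy_p]]; split=> //.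
  have [p_x | x_k] := xy_k x (fset21 x y); first exact: Or31.
  have [p_y | y_k] := xy_k y (fset22 x y); first exact: Or32.
  by apply: Or33; rewrite x_k y_k.
case: xy_p => [p_x | p_y | x_y]; [exists y | exists x | exists x]; split=> // z /fset2P[]->;
  by [left | right].
Qed.

Lemma odd_prime_ndvd_pow2 p n : prime p -> odd p -> ~~ (p %| 2 ^ n).
Proof.
move=> p_pr p_odd; rewrite Euclid_dvdX // dvdn_prime2 //.
by apply: contraTN p_odd => /andP[/eqP-> _].
Qed.

Lemma odd_prime_free_pow2 n : 0 < n ->
  (forall p, prime p -> odd p -> ~~ (p %| n)) -> n = 2 ^ logn 2 n.
Proof.
move=> n_gt0 n_odd_free; rewrite -p_part part_pnat_id //; apply/pnatP => // p p_pr p_n.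
have [p_odd | /(prime_oddPn p_pr)->//] := boolP (odd p).
by rewrite (negbTE (n_odd_free p p_pr p_odd)) in p_n.
Qed.

Lemma odd_prime_free_pair x y : 0 < x -> x < y ->
  (forall p, prime p -> odd p -> ~ [\/ p %| x, p %| y | x = y %[mod p]]) <->
  exists n, x = 2 ^ n /\ y = 2 ^ n.+1.
Proof.
move=> x_gt0 x_lt_y; split=> [no_odd | [n [-> ->]] p p_pr p_odd].
  have pow2 z : 0 < z -> (forall p, p %| z -> [\/ p %| x, p %| y | x = y %[mod p]]) ->
      z = 2 ^ logn 2 z.
    move=> z_gt0 z_xy; apply: odd_prime_free_pow2 => // p p_pr p_odd.
    by apply/negP => /z_xy; exact: no_odd.
  have := pow2 x x_gt0 (fun p => @Or31 _ _ _).
  have := pow2 y (ltn_trans x_gt0 x_lt_y) (fun p => @Or32 _ _ _).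
  move: (logn 2 x) (logn 2 y) => a b y_b x_a; subst x y.
  rewrite ltn_exp2l // in x_lt_y.
  pose m := 2 ^ (b - a) - 1.
  have m_odd : odd m by rewrite oddB ?expn_gt0 // oddX subn_eq0 leqNgt x_lt_y.
  have m_pow : m = 2 ^ logn 2 m.
    apply: pow2 => [|p p_m]; first exact: odd_gt0.
    apply: Or33; apply/eqP; rewrite eq_sym eqn_mod_dvd; last by rewrite leq_exp2l // ltnW.
    by rewrite -{1}(subnKC (ltnW x_lt_y)) expnD -{2}(muln1 (2 ^ a)) -mulnBr dvdn_mull.
  have m1 : m = 1 by move: m_odd; rewrite m_pow oddX orbF => /eqP->.
  have /eqP : 2 ^ (b - a) = 2 ^ 1 by rewrite /m in m1; lia.
  by rewrite eqn_exp2l // => /eqP ba; exists a; split=> //; congr (2 ^ _); lia.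
have p_pow k := odd_prime_ndvd_pow2 k p_pr p_odd.
case; [exact/negP/p_pow | exact/negP/p_pow |].
move/eqP; rewrite eq_sym eqn_mod_dvd ?leq_exp2l // expnS mul2n -addnn addnK.
exact/negP/p_pow.
Qed.

Lemma AE_fset2_eq2P x y : 0 < x -> x < y ->
  (forall p, AE [fset x; y] p <-> p = 2) <-> exists n, x = 2 ^ n /\ y = 2 ^ n.+1.
Proof.
move=> x_gt0 x_lt_y; have y_gt0 := ltn_trans x_gt0 x_lt_y.
apply: iff_trans (AE_eq2P _) (iff_trans _ (odd_prime_free_pair x_gt0 x_lt_y)).
split=> no_odd p p_pr p_odd p_xy; apply: (no_odd p p_pr p_odd).
  exact/(AE_fset2 p x_gt0 y_gt0).
by have [] := (AE_fset2 p x_gt0 y_gt0).1 p_xy.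
Qed.

Lemma cardfs2_lt (E : {fset nat}) : #|` E| = 2 -> exists x y, x < y /\ E = [fset x; y].
Proof.
move=> E2; have /fset0Pn[x x_E] : E != fset0 by rewrite -cardfs_gt0 E2.
have /cardfs1P[y Ex_y] : #|` E `\ x| == 1 by move: E2; rewrite (cardfsD1 x E) x_E => /eqP.
have : y \in E `\ x by rewrite Ex_y fset11.
rewrite in_fsetD1 -(fsetD1K x_E) Ex_y => /andP[y_x _].
case: (ltngtP x y) y_x => [x_lt_y _ | y_lt_x _ | //].
  by exists x, y.
by exists y, x; rewrite fsetUC.
Qed.

Lemma fset2_lt_inj x y u v : x < y -> u < v -> [fset x; y] = [fset u; v] -> x = u /\ y = v.
Proof.
move=> x_lt_y u_lt_v xy_uv.
have /fset2P x_uv : x \in [fset u; v] by rewrite -xy_uv fset21.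
have /fset2P y_uv : y \in [fset u; v] by rewrite -xy_uv fset22.
have /fset2P u_xy : u \in [fset x; y] by rewrite xy_uv fset21.
lia.
Qed.

Theorem lemma3p8 (E : {fset nat}) :
  E != fset0 -> (forall x, x \in E -> 0 < x) ->
  (FE_eq_Finf E <-> (forall p, AE E p <-> p = 2)) /\
  (#|` E| = 2 ->
     (FE_eq_Finf E <-> exists n : nat, E = [fset 2 ^ n; 2 ^ n.+1]) /\
     ((forall p, AE E p <-> p = 2) <-> exists n : nat, E = [fset 2 ^ n; 2 ^ n.+1])).
Proof.
move=> E_n0 E_gt0.
have FE_AE : FE_eq_Finf E <-> (forall p, AE E p <-> p = 2).
  apply: iff_trans _ (iff_sym (AE_eq2P E)).
  split=> [E_eq p p_pr p_odd p_AE | no_odd B _].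
    have multiples_gt0 y : multiples p y -> 0 < y by case.
    exact: multiples_notin_FE p_AE p_odd ((E_eq _ multiples_gt0).2 (Finf_multiples p_pr p_odd)).
  by split; [exact: FE_Finf | exact: Finf_FE].
suff AE_pow2 : #|` E| = 2 ->
    (forall p, AE E p <-> p = 2) <-> exists n, E = [fset 2 ^ n; 2 ^ n.+1].
  by split=> // E2; split; [apply: iff_trans FE_AE (AE_pow2 E2) | exact: AE_pow2].
move=> /cardfs2_lt[x [y [x_lt_y E_xy]]]; subst E.
apply: iff_trans (AE_fset2_eq2P (E_gt0 x (fset21 x y)) x_lt_y) _.
split=> [[n [-> ->]] | [n /fset2_lt_inj xy_n]]; first by exists n.
by exists n; apply: xy_n; rewrite // ltn_exp2l.
Qed.
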